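(* Let $X$ be a Lindelöf $P$-space. Then $C_p(X)$ has a bounded resolution if and only if $X$ is countable and discrete.
   Context: A $P$-space is a Tychonoff space in which every countable intersection of open sets is open. $C_p(X)$ is the space of continuous real-valued functions on $X$ with the pointwise topology. Order $\mathbb{N}^{\mathbb{N}}$ pointwise. A bounded resolution of a locally convex space $F$ is a family $\{B_\alpha:\alpha\in\mathbb{N}^{\mathbb{N}}\}$ of bounded subsets covering $F$ with $B_\alpha\subseteq B_\beta$ whenever $\alpha\le\beta$. *)

From HB Require Import structures.
From mathcomp Require Import all_boot all_order all_algebra.
From mathcomp Require Import all_classical all_reals all_analysis.

Import Order.TTheory GRing.Theory Num.Theory numFieldNormedType.Exports.
Local Open Scope classical_set_scope.
Local Open Scope ring_scope.

Definition tychonoff_space (R : realType) (X : topologicalType) : Prop :=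
  accessible_space X /\ completely_regular_space X.

Definition P_space (R : realType) (X : topologicalType) : Prop :=
  tychonoff_space R X /\
  forall F : nat -> set X, (forall n, open (F n)) -> open (\bigcap_n F n).

Definition lindelof_space (X : topologicalType) : Prop :=
  forall (I : Type) (F : I -> set X), (forall i, open (F i)) ->
    [set: X] `<=` \bigcup_i F i ->
    exists J : set I, countable J /\ [set: X] `<=` \bigcup_(i in J) F i.

Definition discrete_topology_on (X : topologicalType) : Prop :=
  forall A : set X, open A.

(** The underlying set of C_p(X): continuous real-valued functions on X;
    its topology is the subspace topology of the pointwise (product)
    topology {ptws X -> R}. *)
Definition Cp (R : realType) (X : topologicalType) : set (X -> R) :=
  [set f : X -> R | continuous f].

Definition scale_set (R : realType) (X : Type) (t : R) (U : set (X -> R))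
  : set (X -> R) := [set (fun x => t * u x) | u in U].

(** Neighbourhoods of 0 in C_p(X) are the traces on C_p(X) of
    neighbourhoods of 0 in {ptws X -> R}. *)
Definition Cp_bounded (R : realType) (X : topologicalType) (B : set (X -> R))
  : Prop :=
  B `<=` Cp R X /\
  forall U : set {ptws X -> R}, nbhs (0 : {ptws X -> R}) U ->
    exists r : R, 0 < r /\
      forall t : R, r < `|t| -> B `<=` scale_set R X t (U `&` Cp R X).

Definition le_NN (a b : nat -> nat) : Prop := forall n, (a n <= b n)%N.

Definition has_bounded_resolution (R : realType) (X : topologicalType) : Prop :=
  exists B : (nat -> nat) -> set (X -> R),
    (forall a, Cp_bounded R X (B a)) /\
    Cp R X `<=` \bigcup_a B a /\
    (forall a b, le_NN a b -> B a `<=` B b).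

From HB Require Import structures.
From mathcomp Require Import all_boot all_order all_algebra.
From mathcomp Require Import all_classical all_reals all_analysis.
From mathcomp Require Import lra.
Import Order.TTheory GRing.Theory Num.Theory numFieldNormedType.Exports.
Local Open Scope classical_set_scope.
Local Open Scope ring_scope.

(* Two facts about P-spaces drive the proof: countable sets are closed, so a
   countable P-space is discrete; and along any injective sequence (y n) every
   real sequence extends to a continuous function, obtained by gluing constants
   on disjoint clopen neighbourhoods of the y n (zero sets are clopen).
   Given a bounded resolution (B a), let A_s be the set of points at which the
   union of the B b, over the b extending the finite sequence s, is bounded.
   A diagonal argument using monotonicity shows that X is the union of the
   A_(a|k) for every a, so if X is uncountable some A_(a|k) is infinite for
   every a. Pick distinct points y_s in the infinite A_s and a continuous f that
   exceeds at each y_s the bound of A_s there; then f lies in some B a, which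
   contradicts the bound at y_(a|k). Conversely, if e enumerates a countable
   discrete X, the sets {f | |f x| <= a (e x)} form a bounded resolution. *)

Section PSpace.
Context {X : topologicalType}.
Hypothesis open_bigcap_nat :
  forall F : nat -> set X, (forall n, open (F n)) -> open (\bigcap_n F n).

Lemma open_bigcap_countable (I : Type) (D : set I) (F : I -> set X) :
  countable D -> (forall i, D i -> open (F i)) -> open (\bigcap_(i in D) F i).
Proof.
move=> /countable_injP[e e_inj] oF.
have -> : \bigcap_(i in D) F i =
    \bigcap_n \bigcap_(i in D `&` e @^-1` [set n]) F i.
  apply/seteqP; split=> [z Fz n _ i [Di _]|z Fz i Di]; first exact: Fz i Di.
  by apply: (Fz (e i)) => //; split.
apply: open_bigcap_nat => n.
have [[i [Di ein]]|none] := pselect (exists i, (D `&` e @^-1` [set n]) i).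
  have -> : D `&` e @^-1` [set n] = [set i].
    apply/seteqP; split=> [j [Dj ejn]|j ->] //=.
    by apply: e_inj; rewrite ?inE //= ejn.
  by rewrite bigcap_set1; exact: oF.
have -> : D `&` e @^-1` [set n] = set0.
  by apply/seteqP; split=> // j Dj; apply: none; exists j.
by rewrite bigcap_set0; exact: openT.
Qed.

Lemma clopen_zero_set (R : realType) (g : X -> R) :
  continuous g -> clopen (g @^-1` [set 0]).
Proof.
move=> cg; split; last first.
  by apply: closed_comp => [z _|]; [exact: cg | exact: closed_eq].
have -> : g @^-1` [set 0] =
    \bigcap_(k in [set: nat]) g @^-1` ball 0 k.+1%:R^-1.
  apply/seteqP; split=> [z gz0 k _|z gz0]; first by rewrite /= gz0; exact: ballxx.
  apply: contrapT => /eqP; rewrite -normr_gt0 => /ltr_add_invr[k].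
  rewrite add0r; move: (gz0 k I); rewrite /ball /= sub0r normrN.
  by move=> /lt_trans lt_gz /lt_gz; rewrite ltxx.
apply: open_bigcap_countable => // k _.
by apply: open_comp => [z _|]; [exact: cg | exact: ball_open].
Qed.

Definition glue {Y : Type} (V : nat -> set X) (h : nat -> Y) (x : X) : Y :=
  h (xget 0%N [set n | V n x]).

Lemma glueE {Y : Type} {V : nat -> set X} (h : nat -> Y) {n : nat} {x : X} :
  trivIset setT V -> V n x -> glue V h x = h n.
Proof.
move=> tV Vnx; rewrite /glue (xget_unique 0%N Vnx) // => m Vmx.
by apply: tV => //; exists x.
Qed.

Lemma continuous_glue (Y : topologicalType) (V : nat -> set X) (h : nat -> Y) :
  (forall n, clopen (V n)) -> trivIset setT V -> continuous (glue V h).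
Proof.
move=> cV tV x; apply: (near_cst_continuous (glue V h x)).
have [[n Vnx]|noV] := pselect (exists n, V n x).
  have : nbhs x (V n) by apply: open_nbhs_nbhs; split => //; case: (cV n).
  by apply: filterS => z Vnz; rewrite (glueE h tV Vnz) (glueE h tV Vnx).
have : nbhs x (\bigcap_(n in [set: nat]) ~` V n).
  apply: open_nbhs_nbhs; split; last by move=> n _ Vnx; apply: noV; exists n.
  by apply: open_bigcap_countable => // n _; rewrite openC; case: (cV n).
apply: filterS => z Vz; rewrite /glue !xgetPN // => n Vn.
  by apply: noV; exists n.
exact: Vz n I Vn.
Qed.

Hypothesis X_T1 : accessible_space X.

Lemma closed_countable (S : set X) : countable S -> closed S.
Proof.
move=> cS; rewrite -openC -[S in ~` S]image_id -bigcup_imset1 setC_bigcup.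
apply: open_bigcap_countable => // x _; rewrite openC.
exact: accessible_closed_set1.
Qed.

Lemma countable_discrete : countable [set: X] -> forall A : set X, open A.
Proof.
move=> cX A; rewrite -[A]setCK openC; apply: closed_countable.
exact: sub_countable (subset_card_le (@subsetT _ _)) cX.
Qed.

Lemma continuous_extension_nat {R : realType} (y : nat -> X) (h : nat -> R) :
  completely_regular_space X -> injective y ->
  exists2 f : X -> R, continuous f & forall n, f (y n) = h n.
Proof.
move=> X_creg y_inj.
have separate n : exists W : set X,
    [/\ clopen W, W (y n) & forall m, m != n -> ~ W (y m)].
  pose C := y @` [set m | m != n].
  have C_closed : closed C.
    apply: closed_countable; apply: sub_countable (card_image_le _ _) _.
    exact: (@countableP nat).
  have C_yn : ~ C (y n) by move=> [m /= + /y_inj mn]; rewrite mn eqxx.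
  have [g [cg _ g0 g1]] := (@uniform_separatorP X R [set y n] C).1
    (X_creg (y n) C C_closed C_yn).
  exists (g @^-1` [set 0]); split; first exact: clopen_zero_set.
    by apply: g0; exists (y n).
  move=> m mn /= gym.
  have : g (y m) = 1 by apply: g1; exists (y m) => //; exists m.
  by rewrite gym => /eqP; rewrite eq_sym oner_eq0.
have [W W_sep] := choice separate.
have V_clopen n : clopen (seqDU W n).
  rewrite /seqDU setDE; apply: clopenI; first by case: (W_sep n).
  (* [clopenC] takes a superfluous set argument. *)
  apply/(clopenC set0)/(big_ind clopen); first exact: clopen0.
    exact: clopenU.
  by move=> k _; case: (W_sep k).
have V_y n : seqDU W n (y n).
  split; first by case: (W_sep n).
  rewrite -bigcup_mkord => -[k /= kn]; case: (W_sep k) => _ _; apply.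
  by rewrite neq_ltn kn orbT.
have V_disjoint := trivIset_seqDU W.
exists (glue (seqDU W) h); first exact: continuous_glue V_clopen V_disjoint.
by move=> n; apply: glueE; [exact: V_disjoint | exact: V_y].
Qed.

End PSpace.

Lemma Cp_bounded_pointwise {R : realType} {X : topologicalType} {B : set (X -> R)} :
  Cp_bounded R X B -> forall x, exists M : R, forall f, B f -> `|f x| <= M.
Proof.
move=> [_ B_absorbed] x.
have U0 : nbhs (0 : {ptws X -> R}) [set g : X -> R | `|g x| < 1].
  have FF : Filter (nbhs (0 : {ptws X -> R})) by exact: nbhs_filter.
  have eval_cvg := (pointwise_cvgP 0 FF).1 cvg_id x.
  have := (@cvgrPdist_lt _ _ _ _ FF _ _).1 eval_cvg _ ltr01.
  by apply: filterS => g /=; rewrite sub0r normrN.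
have [r [r_gt0 Br]] := B_absorbed _ U0.
have r1_gt0 : 0 < r + 1 := addr_gt0 r_gt0 ltr01.
have r_lt : r < `|r + 1| by rewrite gtr0_norm // ltrDl.
exists (r + 1) => f Bf; have [u [ux_lt1 _] <-] := Br _ r_lt f Bf.
by rewrite normrM (gtr0_norm r1_gt0); apply: ler_piMr; exact: ltW.
Qed.

Lemma Cp_bounded_dominated (R : realType) (X : topologicalType) (w : X -> R) :
  Cp_bounded R X [set f | continuous f /\ forall x, `|f x| <= w x].
Proof.
split=> [f [] //|U U0].
pose D (d : R) := [set g : X -> R | exists t u,
  [/\ `|t| < d, forall x, `|u x| <= w x & g = (fun x => t * u x)]].
pose G := filter_from [set d : R | 0 < d] D.
have G_filter : Filter G.
  apply: filter_from_filter; first by exists 1; exact: ltr01.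
  move=> i j i0 j0; exists (Num.min i j); first by rewrite /= lt_min i0 j0.
  move=> g [t [u [+ hu ->]]]; rewrite lt_min => /andP[ti tj].
  by split; exists t, u.
have G_cvg0 : {ptws, G --> (0 : X -> R)}.
  apply/pointwise_cvgP => x; apply/cvgrPdist_lt => eps eps_gt0.
  have c_gt0 : 0 < `|w x| + 1 := ltr_wpDl (normr_ge0 _) ltr01.
  exists (eps / (`|w x| + 1)); first by rewrite /= divr_gt0.
  move=> g [t [u [t_lt hu ->]]] /=; rewrite sub0r normrN normrM.
  apply: (@le_lt_trans _ _ (`|t| * (`|w x| + 1))); last by rewrite -ltr_pdivlMr.
  apply: ler_wpM2l => //; apply: le_trans (hu x) _.
  by apply: le_trans (ler_norm _) _; rewrite lerDl.
have [d d_gt0 DU] := G_cvg0 U U0.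
exists d^-1; split=> [|t t_gt f [cf hf]]; first by rewrite invr_gt0.
have t_neq0 : t != 0 by rewrite -normr_gt0 (lt_trans _ t_gt) ?invr_gt0.
exists (fun x => t^-1 * f x); last first.
  by apply/funext => x; rewrite mulrA mulfV ?mul1r.
split; last by move=> x; apply: cvgMr; exact: cf.
apply: DU; exists t^-1, f; split => //.
by rewrite normfV -[d]invrK ltf_pV2 ?posrE ?invr_gt0 // (lt_trans _ t_gt) ?invr_gt0.
Qed.

Lemma countable_discrete_bounded_resolution (R : realType) (X : topologicalType) :
  countable [set: X] -> discrete_topology_on X -> has_bounded_resolution R X.
Proof.
move=> /countable_injP[e e_inj] X_discrete.
have X_cont (f : X -> R) : continuous f.
  move=> x; apply: (near_cst_continuous (f x)).
  have : nbhs x [set x] by apply: open_nbhs_nbhs; split => //; exact: X_discrete.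
  by apply: filterS => z ->.
exists (fun a => [set f : X -> R | continuous f /\ forall x, `|f x| <= (a (e x))%:R]).
split; [|split].
- by move=> a; exact: Cp_bounded_dominated.
- move=> f _; have /choice[a fa] :
      forall n, exists k : nat, forall x, e x = n -> `|f x| <= k%:R.
    move=> n; have [[x0 ex0]|none] := pselect (exists x, e x = n); last first.
      by exists 0%N => x exn; exfalso; apply: none; exists x.
    exists (Num.bound `|f x0|) => x exn.
    have -> : x = x0 by apply: e_inj; rewrite ?inE // exn.
    exact/ltW/archi_boundP.
  by exists a => //; split=> // x; exact: fa.
- move=> a b ab f [cf fa]; split=> // x; apply: le_trans (fa x) _.
  by rewrite ler_nat.
Qed.

Lemma le_NN_prefix_majorant (a : nat -> nat) (p : nat -> nat -> nat) :
  (forall k, mkseq (p k) k = mkseq a k) -> exists g, forall k, le_NN (p k) g.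
Proof.
move=> p_prefix; exists (fun n => \max_(j < n.+2) p j n) => k n.
have p_a j m : (m < j)%N -> p j m = a m.
  by move=> mj; rewrite -(nth_mkseq 0%N (p j) mj) p_prefix nth_mkseq.
have [kn|nk] := leqP k n.+1.
  exact: (@leq_bigmax _ (fun j : 'I_n.+2 => p j n) (Ordinal (kn : (k < n.+2)%N))).
rewrite p_a ?(ltnW nk) // -(p_a n.+1 n (ltnSn n)).
exact: (@leq_bigmax _ (fun j : 'I_n.+2 => p j n) (Ordinal (ltnSn n.+1))).
Qed.

Section BoundedLocus.
Context {R : realType} {T : Type} (B : (nat -> nat) -> set (T -> R)).

Definition prefix_union (s : seq nat) : set (T -> R) :=
  \bigcup_(b in [set b | mkseq b (size s) = s]) B b.

Definition bounded_locus (s : seq nat) : set T :=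
  [set x | exists M : R, forall f, prefix_union s f -> `|f x| <= M].

Hypothesis B_pointwise_bounded :
  forall a x, exists M : R, forall f, B a f -> `|f x| <= M.
Hypothesis B_monotone : forall a b, le_NN a b -> B a `<=` B b.

Lemma bounded_locus_cover (a : nat -> nat) (x : T) :
  exists k, bounded_locus (mkseq a k) x.
Proof.
apply: contrapT => /forallNP unbounded.
have /choice[p pP] : forall k, exists p : (nat -> nat) * (T -> R),
    [/\ mkseq p.1 k = mkseq a k, B p.1 p.2 & k%:R < `|p.2 x|].
  move=> k; apply: contrapT => /forallNP none; apply: (unbounded k).
  exists k%:R => f [b /=]; rewrite size_mkseq => bk Bbf.
  by rewrite leNgt; apply/negP => fx_gt; apply: (none (b, f)).
have [g pg] : exists g, forall k, le_NN (p k).1 g.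
  by apply: (@le_NN_prefix_majorant a) => k; case: (pP k).
have [M gM] := B_pointwise_bounded g x.
pose k := Num.bound `|M|.
have [_ Bpk pk_gt] := pP k.
have := gM _ (B_monotone _ _ (pg k) _ Bpk).
have := archi_boundP (normr_ge0 M); have := ler_norm M.
rewrite -/k; lra.
Qed.

Lemma infinite_bounded_locus : ~ countable [set: T] ->
  forall a, exists k, infinite_set (bounded_locus (mkseq a k)).
Proof.
move=> T_uncountable a; apply: contrapT => /forallNP all_finite.
apply: T_uncountable.
have -> : [set: T] = \bigcup_(k in [set: nat]) bounded_locus (mkseq a k).
  by apply/seteqP; split=> x // _; have [k xk] := bounded_locus_cover a x; exists k.
apply: bigcup_countable => // k _; apply: finite_set_countable.
exact: contrapT (all_finite k).
Qed.

End BoundedLocus.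

Lemma injective_seq_in_infinite_sets {T : eqType} (A : nat -> set T) :
  infinite_set [set: T] ->
  exists2 y : nat -> T, injective y & forall n, infinite_set (A n) -> A n (y n).
Proof.
move=> T_infinite.
have /choice[pick pickP] : forall nl : nat * seq T,
    exists z, z \notin nl.2 /\ (infinite_set (A nl.1) -> A nl.1 z).
  move=> [n l] /=; have [An_inf|An_fin] := pselect (infinite_set (A n)).
    have [z [Anz zl]] := infinite_setN0 (infinite_setD An_inf (finite_seq l)).
    by exists z; split=> [|//]; exact/negP.
  have [z [_ zl]] := infinite_setN0 (infinite_setD T_infinite (finite_seq l)).
  by exists z; split=> [|/An_fin //]; exact/negP.
pose ys := fix ys n := if n is m.+1 then rcons (ys m) (pick (m, ys m)) else [::].
exists (fun n => pick (n, ys n)); last by move=> n; case: (pickP (n, ys n)).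
have ys_mem m n : (m < n)%N -> pick (m, ys m) \in ys n.
  elim: n => // n IH; rewrite ltnS leq_eqVlt => /orP[/eqP ->|/IH mn].
    by rewrite /= mem_rcons in_cons eqxx.
  by rewrite /= mem_rcons in_cons mn orbT.
suff y_neq m n : (m < n)%N -> pick (m, ys m) != pick (n, ys n).
  move=> m n eq_y; case: (ltngtP m n) => // mn.
    by move: (y_neq _ _ mn); rewrite eq_y eqxx.
  by move: (y_neq _ _ mn); rewrite eq_y eqxx.
move=> mn; apply/eqP => eq_y; case: (pickP (n, ys n)) => /negP + _.
by apply; rewrite -eq_y; exact: ys_mem.
Qed.

Lemma bounded_resolution_countable {R : realType} {X : topologicalType} :
  accessible_space X -> completely_regular_space X ->
  (forall F : nat -> set X, (forall n, open (F n)) -> open (\bigcap_n F n)) ->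
  has_bounded_resolution R X -> countable [set: X].
Proof.
move=> X_T1 X_creg X_P [B [B_bounded [B_cover B_mono]]].
have B_pt a := Cp_bounded_pointwise (B_bounded a).
apply: contrapT => X_uncountable.
have X_infinite : infinite_set [set: X] by move/finite_set_countable.
pose L n := if unpickle n is Some s then bounded_locus B s else set0.
have [y y_inj yL] := injective_seq_in_infinite_sets L X_infinite.
have /choice[c cP] : forall n, exists M : R, forall s, unpickle n = Some s ->
    infinite_set (L n) -> forall f, prefix_union B s f -> `|f (y n)| <= M.
  move=> n; case En: (unpickle n) => [s|]; last by exists 0.
  have [Ln_inf|Ln_fin] := pselect (infinite_set (L n)).
    by have := yL n Ln_inf; rewrite /L En => -[M yM]; exists M => _ [<-].
  by exists 0 => ? _ /Ln_fin.
have [f f_cont fy] :=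
  continuous_extension_nat X_P X_T1 y (fun n => c n + 1) X_creg y_inj.
have [a _ Baf] := B_cover f f_cont.
have [k k_inf] := infinite_bounded_locus _ B_pt B_mono X_uncountable a.
have Ln_inf : infinite_set (L (pickle (mkseq a k))) by rewrite /L pickleK.
have Pf : prefix_union B (mkseq a k) f by exists a => //=; rewrite size_mkseq.
have := cP _ _ (pickleK _) Ln_inf f Pf; rewrite fy.
have := ler_norm (c (pickle (mkseq a k)) + 1); lra.
Qed.

Theorem proposition3p4 (R : realType) (X : topologicalType) :
  lindelof_space X -> P_space R X ->
  (has_bounded_resolution R X <->
   (countable [set: X] /\ discrete_topology_on X)).
Proof.
move=> _ [[X_T1 X_creg] X_P]; split=> [X_res|[X_countable X_discrete]].
  have X_countable := bounded_resolution_countable X_T1 X_creg X_P X_res.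
  by split=> //; exact: countable_discrete X_P X_T1 X_countable.
exact: countable_discrete_bounded_resolution.
Qed.
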